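(* Let $A>0$, let $c_0\in\mathrm{Imm}(S^1,\mathbb R^2)$ have constant speed $|c_{0,\theta}|\equiv\ell/2\pi$ where $\ell=\ell(c_0)$, and let $0<\varepsilon<\min\{2\sqrt{A\ell},\ell^{3/2}\}/8$. Let $c:[0,1]\times S^1\to\mathbb R^2$ be a smooth path in $\mathrm{Imm}(S^1,\mathbb R^2)$ with $c(0,\cdot)=c_0$ which is horizontal ($\langle c_t,c_\theta\rangle\equiv0$) and satisfies $\int_{S^1}(1+A\kappa_{c(t)}^2)|c_t|^2|c_\theta|\,d\theta=\varepsilon^2$ for all $t\in[0,1]$. Then with $\eta=4(\ell^{3/4}A^{-1/4}+\ell^{1/4})\sqrt\varepsilon$, $$\max_{\theta\in S^1}|c(0,\theta)-c(1,\theta)|\le\eta.$$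
   Context: $S^1=\mathbb R/2\pi\mathbb Z$, $\mathbb R^2\cong\mathbb C$. $\mathrm{Imm}(S^1,\mathbb R^2)$ is the space of smooth immersions; a smooth path in it is a jointly smooth map $c(t,\theta)$ with each $c(t,\cdot)$ an immersion. $\ell(c)=\int_{S^1}|c_\theta|\,d\theta$, $\kappa_c=\det(c_\theta,c_{\theta\theta})/|c_\theta|^3$. *)

From Stdlib Require Import Reals.
From Coquelicot Require Import Coquelicot.
Open Scope R_scope.

Definition I01 (t : R) : Prop := 0 <= t <= 1.

Definition cont01 (f : R -> R -> R) : Prop :=
  forall t th, I01 t -> forall eps, 0 < eps -> exists del, 0 < del /\
    forall t' th', I01 t' -> Rabs (t' - t) < del -> Rabs (th' - th) < del ->
      Rabs (f t' th' - f t th) < eps.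

Definition pderiv_t01 (f g : R -> R -> R) : Prop :=
  forall t th, I01 t -> forall eps, 0 < eps -> exists del, 0 < del /\
    forall h, h <> 0 -> I01 (t + h) -> Rabs h < del ->
      Rabs ((f (t + h) th - f t th) / h - g t th) < eps.

Definition pderiv_th01 (f g : R -> R -> R) : Prop :=
  forall t th, I01 t -> is_derive (f t) th (g t th).

(* D i j is the mixed partial derivative d_t^i d_theta^j of D 0 0;
   all of them exist and are jointly continuous on [0,1] x R:
   i.e. D 0 0 is smooth on [0,1] x R. *)
Definition smooth_family (D : nat -> nat -> R -> R -> R) : Prop :=
  forall i j, cont01 (D i j) /\ pderiv_t01 (D i j) (D (S i) j)
              /\ pderiv_th01 (D i j) (D i (S j)).

(* For a planar curve given by components (X, Y) as functions of theta,
   with first derivatives (X1, Y1) and second derivatives (X2, Y2): *)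
Definition speed (X1 Y1 : R) : R := sqrt (X1 ^ 2 + Y1 ^ 2).

Definition curvature (X1 Y1 X2 Y2 : R) : R :=
  (X1 * Y2 - Y1 * X2) / (speed X1 Y1) ^ 3.

(* Project the curves on the unit vector u from c(0,θ0) to c(1,θ0), and compare ⟨u, c(t,θ0)⟩
   with its arclength average N(t)/L(t) over a short arc around θ0 of length L(t); the two
   differ by at most L(t).  Horizontality turns the time derivative of the arclength density
   into -⟨c_t, c_θθ⟩/|c_θ|, so Cauchy-Schwarz and AM-GM against the energy give
   |L'| <= ε √L / √A and |(N/L)'| <= ε / √L + ε √L / √A.  Hence √L moves by at most
   ε / (2√A) over [0,1], and the initial arclength σ^2, with σ = √ε ℓ^(-1/4) + ℓ^(1/4) A^(-1/4) √ε / 2,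
   balances the resulting error terms below η. *)

From Stdlib Require Import Reals Lra Psatz Lia ZArith.
From Coquelicot Require Import Coquelicot.
Open Scope R_scope.

(** * Riemann integrals of real functions *)

(* Coquelicot states integral identities in the carrier of a normed module; [ring_R] and
   [field_R] first restate such an equation in R. *)
Ltac ring_R := match goal with |- @eq _ ?a ?b => change (@eq R a b) end; ring.
Ltac field_R := match goal with |- @eq _ ?a ?b => change (@eq R a b) end; field.

Lemma RInt_plus_R (f g : R -> R) a b : ex_RInt f a b -> ex_RInt g a b ->
  RInt (fun x => f x + g x) a b = RInt f a b + RInt g a b.
Proof. exact (RInt_plus (V := R_CompleteNormedModule) f g a b). Qed.

Lemma RInt_minus_R (f g : R -> R) a b : ex_RInt f a b -> ex_RInt g a b ->
  RInt (fun x => f x - g x) a b = RInt f a b - RInt g a b.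
Proof. exact (RInt_minus (V := R_CompleteNormedModule) f g a b). Qed.

Lemma RInt_scal_R (f : R -> R) a b l : ex_RInt f a b ->
  RInt (fun x => l * f x) a b = l * RInt f a b.
Proof. exact (RInt_scal (V := R_CompleteNormedModule) f a b l). Qed.

Lemma ex_RInt_plus_R (f g : R -> R) a b : ex_RInt f a b -> ex_RInt g a b ->
  ex_RInt (fun x => f x + g x) a b.
Proof. exact (ex_RInt_plus (V := R_NormedModule) f g a b). Qed.

Lemma ex_RInt_minus_R (f g : R -> R) a b : ex_RInt f a b -> ex_RInt g a b ->
  ex_RInt (fun x => f x - g x) a b.
Proof. exact (ex_RInt_minus (V := R_NormedModule) f g a b). Qed.

Lemma ex_RInt_scal_R (f : R -> R) a b l : ex_RInt f a b -> ex_RInt (fun x => l * f x) a b.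
Proof. exact (ex_RInt_scal (V := R_NormedModule) f a b l). Qed.

Lemma ex_RInt_of_ex_derive (f : R -> R) a b : (forall x, ex_derive f x) -> ex_RInt f a b.
Proof.
  intros Hf. apply (ex_RInt_continuous (V := R_CompleteNormedModule)).
  intros x _. exact (ex_derive_continuous (K := R_AbsRing) (V := R_NormedModule) f x (Hf x)).
Qed.

Lemma abs_RInt_le_RInt (g h : R -> R) a b : a <= b -> ex_RInt g a b -> ex_RInt h a b ->
  (forall x, a <= x <= b -> Rabs (g x) <= h x) -> Rabs (RInt g a b) <= RInt h a b.
Proof.
  intros Hab Hg Hh H. apply Rabs_le. split.
  - rewrite <- (Rmult_1_l (RInt h a b)), Ropp_mult_distr_l, <- RInt_scal_R by exact Hh.
    apply RInt_le; auto; [apply ex_RInt_scal_R; exact Hh |].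
    intros x Hx. specialize (H x ltac:(lra)). apply Rabs_le_between in H. lra.
  - apply RInt_le; auto.
    intros x Hx. specialize (H x ltac:(lra)). apply Rabs_le_between in H. lra.
Qed.

(* The weight γ is optimised after integrating: γ = √(∫S) / (E √c). *)
Lemma abs_RInt_le_amgm (g e S : R -> R) a b c E :
  a <= b -> ex_RInt g a b -> ex_RInt e a b -> ex_RInt S a b ->
  0 < c -> 0 < E -> RInt e a b <= E ^ 2 -> 0 < RInt S a b ->
  (forall gam, 0 < gam -> forall x, a <= x <= b -> 2 * Rabs (g x) <= gam * e x + S x / (gam * c)) ->
  Rabs (RInt g a b) <= E * sqrt (RInt S a b) / sqrt c.
Proof.
  intros Hab Hg He HS Hc HE HeE HL Hp.
  set (L := RInt S a b) in *.
  assert (HqL : 0 < sqrt L) by (apply sqrt_lt_R0; lra).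
  assert (Hqc : 0 < sqrt c) by (apply sqrt_lt_R0; lra).
  set (gam := sqrt L / (E * sqrt c)).
  assert (Hgam : 0 < gam) by (unfold gam; apply Rdiv_lt_0_compat; nra).
  set (h := fun x => gam / 2 * e x + / (2 * gam * c) * S x).
  assert (Hh : ex_RInt h a b) by (apply ex_RInt_plus_R; apply ex_RInt_scal_R; auto).
  apply Rle_trans with (RInt h a b).
  { apply abs_RInt_le_RInt; auto. intros x Hx. specialize (Hp gam Hgam x Hx). unfold h.
    replace (S x / (gam * c)) with (2 * (/ (2 * gam * c) * S x)) in Hp by (field; lra). lra. }
  unfold h. rewrite RInt_plus_R by (apply ex_RInt_scal_R; assumption).
  rewrite !RInt_scal_R by assumption. fold L.
  apply Rle_trans with (gam / 2 * E ^ 2 + / (2 * gam * c) * L).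
  { apply Rplus_le_compat_r, Rmult_le_compat_l; lra. }
  right. unfold gam.
  assert (EL : L = sqrt L * sqrt L) by (rewrite sqrt_sqrt; lra).
  assert (Ec : c = sqrt c * sqrt c) by (rewrite sqrt_sqrt; lra).
  set (qL := sqrt L) in *. set (qc := sqrt c) in *.
  rewrite EL, Ec. field. split; lra.
Qed.

Lemma abs_sub_le_sub_of_abs_derive_le (g dg I dI : R -> R) u v :
  (forall x, is_derive g x (dg x)) -> (forall x, is_derive I x (dI x)) ->
  (forall x, Rabs (dg x) <= dI x) -> u <= v -> Rabs (g v - g u) <= I v - I u.
Proof.
  intros Hg HI Hdg Huv.
  assert (Hcont : forall f df, (forall x, is_derive f x (df x)) -> forall x, continuity_pt f x).
  { intros f df Hf x. apply continuity_pt_filterlim.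
    apply (ex_derive_continuous (K := R_AbsRing) (V := R_NormedModule)). eexists; apply Hf. }
  apply Rabs_le. split.
  - destruct (MVT_gen (fun x => I x + g x) u v (fun x => dI x + dg x)) as [c [_ Heq]].
    + intros x _. apply (is_derive_plus (K := R_AbsRing) (V := R_NormedModule)); auto.
    + intros x _. apply continuity_pt_plus; eapply Hcont; eauto.
    + specialize (Hdg c). apply Rabs_le_between in Hdg.
      assert (0 <= (dI c + dg c) * (v - u)) by (apply Rmult_le_pos; lra). lra.
  - destruct (MVT_gen (fun x => I x - g x) u v (fun x => dI x - dg x)) as [c [_ Heq]].
    + intros x _. apply (is_derive_minus (K := R_AbsRing) (V := R_NormedModule)); auto.
    + intros x _. apply continuity_pt_minus; eapply Hcont; eauto.
    + specialize (Hdg c). apply Rabs_le_between in Hdg.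
      assert (0 <= (dI c - dg c) * (v - u)) by (apply Rmult_le_pos; lra). lra.
Qed.

Lemma oscillation_le_RInt (g dg s : R -> R) al be x y :
  (forall z, is_derive g z (dg z)) -> (forall z, Rabs (dg z) <= s z) -> (forall z, continuous s z) ->
  al <= x <= be -> al <= y <= be -> Rabs (g y - g x) <= RInt s al be.
Proof.
  intros Hg Hdg Hs Hx Hy.
  assert (Hex : forall u v, ex_RInt s u v)
    by (intros; apply (ex_RInt_continuous (V := R_CompleteNormedModule)); auto).
  assert (Hs0 : forall z, 0 <= s z) by (intros z; eapply Rle_trans; [apply Rabs_pos | apply Hdg]).
  set (I := fun z => RInt s al z).
  assert (HI : forall z, is_derive I z (s z)).
  { intros z. apply (is_derive_RInt (V := R_NormedModule) s I al z); [| apply Hs].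
    exists (mkposreal 1 Rlt_0_1). intros w _. apply (RInt_correct (V := R_CompleteNormedModule)), Hex. }
  assert (Hch : forall u v, u <= v -> I v - I u = RInt s u v /\ 0 <= RInt s u v).
  { intros u v Huv. split; [| apply RInt_ge_0; auto].
    unfold I. rewrite <- (RInt_Chasles (V := R_CompleteNormedModule) s al u v (Hex _ _) (Hex _ _)).
    simpl. unfold plus; simpl. ring. }
  assert (Hal : I al = 0) by apply (RInt_point (V := R_CompleteNormedModule)).
  destruct (Rle_dec x y) as [Hle|Hlt].
  - eapply Rle_trans; [exact (abs_sub_le_sub_of_abs_derive_le g dg I s x y Hg HI Hdg Hle) |].
    destruct (Hch y be) as [H1 H2]; [lra |]. destruct (Hch al x) as [H3 H4]; [lra |].
    change (I y - I x <= I be). lra.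
  - rewrite Rabs_minus_sym.
    eapply Rle_trans; [exact (abs_sub_le_sub_of_abs_derive_le g dg I s y x Hg HI Hdg ltac:(lra)) |].
    destruct (Hch x be) as [H1 H2]; [lra |]. destruct (Hch al y) as [H3 H4]; [lra |].
    change (I x - I y <= I be). lra.
Qed.

(** * Comparison estimates in time *)

Section Drift.

Variables (L N Ld Nd : R -> R) (eps A : R).
Hypothesis HA : 0 < A.
Hypothesis Heps : 0 < eps.
Hypothesis HLc : forall t, continuity_pt L t.
Hypothesis HLd : forall t, 0 < t < 1 -> is_derive L t (Ld t).
Hypothesis HLpos : forall t, 0 <= t <= 1 -> 0 < L t.
Hypothesis HLd_le : forall t, 0 <= t <= 1 -> Rabs (Ld t) <= eps * sqrt (L t) / sqrt A.

Lemma sqrt_drift_le t : 0 <= t <= 1 -> Rabs (sqrt (L t) - sqrt (L 0)) <= eps / (2 * sqrt A).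
Proof.
  intros Ht.
  assert (HsA : 0 < sqrt A) by (apply sqrt_lt_R0; lra).
  destruct (MVT_gen (fun t => sqrt (L t)) 0 t (fun t => Ld t / (2 * sqrt (L t)))) as [c [Hc Heq]].
  - intros x Hx. rewrite Rmin_left, Rmax_right in Hx by lra.
    apply (is_derive_sqrt L x (Ld x)); [apply HLd | apply HLpos]; lra.
  - intros x Hx. rewrite Rmin_left, Rmax_right in Hx by lra.
    apply (continuity_pt_comp L sqrt); [apply HLc |].
    apply continuity_pt_sqrt. left; apply HLpos; lra.
  - rewrite Rmin_left, Rmax_right in Hc by lra.
    rewrite Heq, Rminus_0_r.
    assert (Hq : 0 < sqrt (L c)) by (apply sqrt_lt_R0, HLpos; lra).
    assert (Hb := HLd_le c ltac:(lra)).
    rewrite Rabs_mult, (Rabs_right t) by lra.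
    unfold Rdiv at 1. rewrite Rabs_mult, Rabs_inv, (Rabs_right (2 * sqrt (L c))) by lra.
    apply Rle_trans with (eps * sqrt (L c) / sqrt A * / (2 * sqrt (L c)) * 1).
    + apply Rmult_le_compat; try lra.
      * apply Rmult_le_pos; [apply Rabs_pos | left; apply Rinv_0_lt_compat; lra].
      * apply Rmult_le_compat_r; [left; apply Rinv_0_lt_compat; lra | exact Hb].
    + right. field. lra.
Qed.

Hypothesis HNc : forall t, continuity_pt N t.
Hypothesis HNd : forall t, 0 < t < 1 -> is_derive N t (Nd t).
Hypothesis HNd_le : forall t, 0 <= t <= 1 ->
  Rabs (Nd t * L t - N t * Ld t) <= L t * eps * sqrt (L t) + L t ^ 2 * eps * sqrt (L t) / sqrt A.

Lemma ratio_drift_le : eps / (2 * sqrt A) < sqrt (L 0) ->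
  N 1 / L 1 - N 0 / L 0 <=
  eps / (sqrt (L 0) - eps / (2 * sqrt A)) + eps * (sqrt (L 0) + eps / (2 * sqrt A)) / sqrt A.
Proof.
  intros Hk.
  assert (HsA : 0 < sqrt A) by (apply sqrt_lt_R0; lra).
  set (k := eps / (2 * sqrt A)) in *.
  destruct (MVT_gen (fun t => N t / L t) 0 1 (fun t => (Nd t * L t - N t * Ld t) / L t ^ 2))
    as [c [Hc Heq]].
  - intros x Hx. rewrite Rmin_left, Rmax_right in Hx by lra.
    apply is_derive_div; [apply HNd | apply HLd | apply Rgt_not_eq, HLpos]; lra.
  - intros x Hx. rewrite Rmin_left, Rmax_right in Hx by lra.
    apply continuity_pt_div; auto. apply Rgt_not_eq, HLpos; lra.
  - rewrite Rmin_left, Rmax_right in Hc by lra.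
    rewrite Heq, Rminus_0_r, Rmult_1_r.
    assert (HLc0 := HLpos c Hc). assert (Hq : 0 < sqrt (L c)) by (apply sqrt_lt_R0; lra).
    assert (Hb := HNd_le c Hc). assert (Hs := sqrt_drift_le c Hc). fold k in Hs.
    apply Rabs_le_between in Hs.
    assert (HLq : L c = sqrt (L c) * sqrt (L c)) by (rewrite sqrt_sqrt; lra).
    set (q := sqrt (L c)) in *. set (Lc := L c) in *.
    apply Rle_trans with ((Lc * eps * q + Lc ^ 2 * eps * q / sqrt A) / Lc ^ 2).
    { unfold Rdiv. apply Rmult_le_compat_r; [left; apply Rinv_0_lt_compat, pow_lt; lra |].
      eapply Rle_trans; [apply Rle_abs | exact Hb]. }
    replace ((Lc * eps * q + Lc ^ 2 * eps * q / sqrt A) / Lc ^ 2) with (eps / q + eps * q / sqrt A)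
      by (rewrite HLq; field; lra).
    apply Rplus_le_compat.
    + unfold Rdiv. apply Rmult_le_compat_l; [lra |]. apply Rinv_le_contravar; lra.
    + unfold Rdiv. apply Rmult_le_compat_r; [left; apply Rinv_0_lt_compat; lra |].
      apply Rmult_le_compat_l; lra.
Qed.

End Drift.

(** * Pointwise inequalities for a curve and a horizontal velocity *)

Definition energy_density (A p q m n a b : R) : R :=
  (1 + A * curvature p q m n ^ 2) * (a ^ 2 + b ^ 2) * speed p q.

Definition speed_rate (p q p' q' : R) : R := (p * p' + q * q') / speed p q.

Lemma sum_sq_pos_of_speed_neq0 p q : speed p q <> 0 -> 0 < p ^ 2 + q ^ 2.
Proof.
  unfold speed. intros H. destruct (Rle_lt_dec (p ^ 2 + q ^ 2) 0) as [Hle|]; auto.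
  exfalso. apply H. replace (p ^ 2 + q ^ 2) with 0 by nra. apply sqrt_0.
Qed.

Lemma speed_pos p q : speed p q <> 0 -> 0 < speed p q.
Proof. intros H. apply sqrt_lt_R0, sum_sq_pos_of_speed_neq0, H. Qed.

Lemma speed_sq p q : speed p q * speed p q = p ^ 2 + q ^ 2.
Proof. apply sqrt_sqrt. nra. Qed.

Lemma abs_le_of_sq_le z r : 0 <= r -> z ^ 2 <= r ^ 2 -> Rabs z <= r.
Proof. intros H1 H2. rewrite <- (Rabs_right r) by lra. apply Rsqr_le_abs_0. unfold Rsqr. nra. Qed.

Lemma unit_proj_sq_le u1 u2 a b : u1 ^ 2 + u2 ^ 2 = 1 -> (u1 * a + u2 * b) ^ 2 <= a ^ 2 + b ^ 2.
Proof.
  intros Hu. replace (a ^ 2 + b ^ 2) with ((u1 ^ 2 + u2 ^ 2) * (a ^ 2 + b ^ 2)) by (rewrite Hu; ring).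
  assert (0 <= (u1 * b - u2 * a) ^ 2) by apply pow2_ge_0. nra.
Qed.

Lemma abs_unit_proj_le_speed u1 u2 a b : u1 ^ 2 + u2 ^ 2 = 1 -> Rabs (u1 * a + u2 * b) <= speed a b.
Proof.
  intros Hu. apply abs_le_of_sq_le; [apply sqrt_pos |].
  replace (speed a b ^ 2) with (a ^ 2 + b ^ 2) by (rewrite <- speed_sq; ring).
  apply unit_proj_sq_le, Hu.
Qed.

(* Since (a, b) ⊥ (p, q), ⟨(a, b), (m, n)⟩ = ± |(a, b)| κ |(p, q)|^3, so the speed rate is
   ∓ |(a, b)| κ |(p, q)|^2, which AM-GM with weight g bounds by the energy density. *)
Lemma speed_rate_amgm p q m n a b p' q' A g :
  0 < speed p q -> a * p + b * q = 0 -> p * p' + q * q' = - (a * m + b * n) -> 0 < A -> 0 < g ->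
  2 * Rabs (speed_rate p q p' q') <= g * energy_density A p q m n a b + speed p q / (g * A).
Proof.
  intros HS Horth Hrate HA Hg. unfold energy_density, curvature.
  set (st := speed_rate p q p' q').
  assert (Hst : st * speed p q = - (a * m + b * n)) by (unfold st, speed_rate; rewrite <- Hrate; field; lra).
  clearbody st. set (S := speed p q) in *.
  assert (HS2 : S * S = p * p + q * q) by (unfold S; rewrite speed_sq; ring).
  set (K := (p * n - q * m) / S ^ 3).
  assert (HK : K * S ^ 3 = p * n - q * m) by (unfold K; field; lra).
  assert (Hid : (a * m + b * n) * (p * p + q * q)
                = (a * p + b * q) * (p * m + q * n) + (p * b - q * a) * (p * n - q * m)) by ring.
  assert (Hst2 : st = - (p * b - q * a) * K).
  { rewrite Horth, <- HS2, <- HK in Hid. apply Rmult_eq_reg_r with (S ^ 3); [| apply pow_nonzero; lra].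
    replace (st * S ^ 3) with ((st * S) * (S * S)) by ring. rewrite Hst. nra. }
  assert (Hpb : (p * b - q * a) ^ 2 = (a ^ 2 + b ^ 2) * (S * S)).
  { rewrite HS2. replace ((p * b - q * a) ^ 2) with ((a * a + b * b) * (p * p + q * q) - (a * p + b * q) ^ 2)
      by ring. rewrite Horth. ring. }
  assert (Hsq : st ^ 2 = (a ^ 2 + b ^ 2) * (S * S) * K ^ 2) by (rewrite Hst2, <- Hpb; ring).
  set (E := (1 + A * K ^ 2) * (a ^ 2 + b ^ 2) * S).
  assert (HE : 0 <= E) by (unfold E; apply Rmult_le_pos; [apply Rmult_le_pos |]; nra).
  assert (Hw : 0 < S / (g * A)) by (apply Rdiv_lt_0_compat; nra).
  replace (2 * Rabs st) with (Rabs (2 * st)) by (rewrite Rabs_mult, Rabs_right by lra; ring).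
  apply abs_le_of_sq_le; [nra |].
  assert (HES : E * (S / (g * A)) * g = E * S / A) by (field; lra).
  assert (H4 : E * S / A >= st ^ 2).
  { unfold E. rewrite Hsq. unfold Rdiv.
    replace ((1 + A * K ^ 2) * (a ^ 2 + b ^ 2) * S * S * / A)
      with ((a ^ 2 + b ^ 2) * (S * S) * / A + (a ^ 2 + b ^ 2) * (S * S) * K ^ 2) by (field; lra).
    assert (0 <= (a ^ 2 + b ^ 2) * (S * S) * / A)
      by (apply Rmult_le_pos; [nra | left; apply Rinv_0_lt_compat; lra]).
    lra. }
  set (w := S / (g * A)) in *.
  assert (0 <= (g * E - w) ^ 2) by apply pow2_ge_0.
  replace ((2 * st) ^ 2) with (4 * st ^ 2) by ring. nra.
Qed.

Lemma velocity_amgm p q m n a b A g v :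
  0 < speed p q -> v ^ 2 <= a ^ 2 + b ^ 2 -> 0 <= A -> 0 < g ->
  2 * Rabs (v * speed p q) <= g * energy_density A p q m n a b + speed p q / g.
Proof.
  intros HS Hv HA Hg. unfold energy_density.
  set (S := speed p q) in *. set (K := curvature p q m n).
  set (E := (1 + A * K ^ 2) * (a ^ 2 + b ^ 2) * S).
  assert (HE : E >= (a ^ 2 + b ^ 2) * S).
  { unfold E. assert (0 <= A * K ^ 2 * ((a ^ 2 + b ^ 2) * S)).
    { apply Rmult_le_pos; [apply Rmult_le_pos; [lra | apply pow2_ge_0] | apply Rmult_le_pos; nra]. }
    nra. }
  assert (Hw : 0 < S / g) by (apply Rdiv_lt_0_compat; nra).
  replace (2 * Rabs (v * S)) with (Rabs (2 * v * S)) by (rewrite !Rabs_mult, (Rabs_right 2) by lra; ring).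
  assert (HE0 : 0 <= E) by (assert (0 <= (a ^ 2 + b ^ 2) * S) by (apply Rmult_le_pos; nra); lra).
  apply abs_le_of_sq_le; [apply Rplus_le_le_0_compat; [apply Rmult_le_pos |]; lra |].
  assert (HES : E * (S / g) * g = E * S) by (field; lra).
  set (w := S / g) in *.
  assert (0 <= (g * E - w) ^ 2) by apply pow2_ge_0.
  assert (v ^ 2 * (S * S) <= (a ^ 2 + b ^ 2) * (S * S)) by (apply Rmult_le_compat_r; nra).
  assert (E * S >= (a ^ 2 + b ^ 2) * S * S) by (apply Rmult_ge_compat_r; lra).
  replace ((2 * v * S) ^ 2) with (4 * (v ^ 2 * (S * S))) by ring. nra.
Qed.

(** * Estimates on an arc of a single curve *)

(* For a curve with c_θ = (x1, y1) and time velocity c_t = (xt, yt), where (xt1, yt1) is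
   ∂_θ c_t = ∂_t c_θ, the two rates below are the time derivatives of the arclength and of
   the arclength moment of a function f with time derivative ft. *)
Definition arc_length (x1 y1 : R -> R) (al be : R) : R :=
  RInt (fun th => speed (x1 th) (y1 th)) al be.

Definition arc_moment (f x1 y1 : R -> R) (al be : R) : R :=
  RInt (fun th => f th * speed (x1 th) (y1 th)) al be.

Definition arc_length_rate (x1 y1 xt1 yt1 : R -> R) (al be : R) : R :=
  RInt (fun th => speed_rate (x1 th) (y1 th) (xt1 th) (yt1 th)) al be.

Definition arc_moment_rate (f ft x1 y1 xt1 yt1 : R -> R) (al be : R) : R :=
  RInt (fun th => ft th * speed (x1 th) (y1 th) + f th * speed_rate (x1 th) (y1 th) (xt1 th) (yt1 th))
    al be.

Section ArcEstimates.

Variables (A eps al be : R) (x1 y1 x2 y2 xt yt xt1 yt1 f f1 ft : R -> R).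
Hypothesis HA : 0 < A.
Hypothesis Heps : 0 < eps.
Hypothesis Hal : 0 <= al.
Hypothesis Hab : al < be.
Hypothesis Hbe : be <= 2 * PI.
Hypothesis Hx1 : forall th, is_derive x1 th (x2 th).
Hypothesis Hy1 : forall th, is_derive y1 th (y2 th).
Hypothesis Hx2 : forall th, ex_derive x2 th.
Hypothesis Hy2 : forall th, ex_derive y2 th.
Hypothesis Hxt : forall th, is_derive xt th (xt1 th).
Hypothesis Hyt : forall th, is_derive yt th (yt1 th).
Hypothesis Hxt1 : forall th, ex_derive xt1 th.
Hypothesis Hyt1 : forall th, ex_derive yt1 th.
Hypothesis Hf : forall th, is_derive f th (f1 th).
Hypothesis Hf1 : forall th, Rabs (f1 th) <= speed (x1 th) (y1 th).
Hypothesis Hft : forall th, ex_derive ft th.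
Hypothesis Hft_le : forall th, ft th ^ 2 <= xt th ^ 2 + yt th ^ 2.
Hypothesis Himm : forall th, speed (x1 th) (y1 th) <> 0.
Hypothesis Hhor : forall th, xt th * x1 th + yt th * y1 th = 0.
Hypothesis Henergy :
  RInt (fun th => energy_density A (x1 th) (y1 th) (x2 th) (y2 th) (xt th) (yt th)) 0 (2 * PI) = eps ^ 2.

Let S th := speed (x1 th) (y1 th).
Let St th := speed_rate (x1 th) (y1 th) (xt1 th) (yt1 th).
Let e th := energy_density A (x1 th) (y1 th) (x2 th) (y2 th) (xt th) (yt th).
Let L := arc_length x1 y1 al be.
Let N := arc_moment f x1 y1 al be.
Let Lr := arc_length_rate x1 y1 xt1 yt1 al be.

Fact arc_sq_speed_pos th : 0 < x1 th ^ 2 + y1 th ^ 2.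
Proof. apply sum_sq_pos_of_speed_neq0, Himm. Qed.

Fact arc_speed_pos th : 0 < S th.
Proof. apply speed_pos, Himm. Qed.

Local Ltac derivable :=
  try unfold S, St, e; unfold energy_density, speed_rate, curvature, speed; auto_derive;
  repeat match goal with
  | |- _ /\ _ => split
  | |- True => exact I
  | |- ex_derive _ _ => first [solve [eauto] | eexists; solve [eauto]]
  | |- _ * _ <> 0 => apply Rmult_integral_contrapositive_currified
  | |- 1 <> 0 => exact R1_neq_R0
  | |- 0 < sqrt _ => apply sqrt_lt_R0
  | |- sqrt _ <> 0 => apply Rgt_not_eq, sqrt_lt_R0
  | |- sqrt _ ^ _ <> 0 => apply pow_nonzero
  | |- 0 < _ => match goal with |- context [x1 ?t] => pose proof (arc_sq_speed_pos t); nra end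
  end.

Local Ltac integrable := apply ex_RInt_of_ex_derive; intros ?th; derivable.

Local Ltac continuous_on :=
  intros ?x _; apply (ex_derive_continuous (K := R_AbsRing) (V := R_NormedModule)); derivable.

Fact arc_energy_le : RInt e al be <= eps ^ 2.
Proof.
  assert (Hex : forall a b, ex_RInt e a b) by (intros; integrable).
  assert (He0 : forall th, 0 <= e th).
  { intros th. pose proof (arc_speed_pos th). unfold e, energy_density.
    assert (0 <= A * curvature (x1 th) (y1 th) (x2 th) (y2 th) ^ 2)
      by (apply Rmult_le_pos; [lra | apply pow2_ge_0]).
    apply Rmult_le_pos; [apply Rmult_le_pos |]; unfold S in *; nra. }
  assert (X1 := RInt_Chasles (V := R_CompleteNormedModule) e 0 al be (Hex _ _) (Hex _ _)).
  assert (X2 := RInt_Chasles (V := R_CompleteNormedModule) e 0 be (2 * PI) (Hex _ _) (Hex _ _)).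
  assert (0 <= RInt e 0 al) by (apply RInt_ge_0; auto).
  assert (0 <= RInt e be (2 * PI)) by (apply RInt_ge_0; auto).
  change plus with Rplus in X1, X2. change (RInt e 0 (2 * PI) = eps ^ 2) in Henergy. lra.
Qed.

Lemma arc_length_pos : 0 < arc_length x1 y1 al be.
Proof.
  apply Rle_lt_trans with (RInt (fun _ => 0) al be).
  { right. rewrite RInt_const. unfold scal; simpl; unfold mult; simpl. ring. }
  apply RInt_lt; [exact Hab | continuous_on | intros; apply continuous_const | intros; apply arc_speed_pos].
Qed.

(* Differentiate the horizontality condition ⟨c_t, c_θ⟩ = 0 in θ. *)
Fact speed_rate_numer_horizontal th :
  x1 th * xt1 th + y1 th * yt1 th = - (xt th * x2 th + yt th * y2 th).
Proof.
  assert (D1 : is_derive (fun th => xt th * x1 th + yt th * y1 th) th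
                 (xt1 th * x1 th + xt th * x2 th + (yt1 th * y1 th + yt th * y2 th))).
  { apply (is_derive_plus (K := R_AbsRing) (V := R_NormedModule));
      apply (is_derive_mult (K := R_AbsRing)); auto; intros; apply Rmult_comm. }
  assert (D0 : is_derive (fun th => xt th * x1 th + yt th * y1 th) th 0).
  { apply (is_derive_ext (fun _ => 0)); [intros; rewrite Hhor; reflexivity |].
    apply (is_derive_const (K := R_AbsRing) (V := R_NormedModule)). }
  pose proof (is_derive_unique _ _ _ D1) as E1. rewrite (is_derive_unique _ _ _ D0) in E1. lra.
Qed.

Fact speed_rate_amgm_at gam th : 0 < gam ->
  2 * Rabs (St th) <= gam * e th + S th / (gam * A).
Proof.
  intros Hg. apply speed_rate_amgm; auto; [apply arc_speed_pos | apply speed_rate_numer_horizontal].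
Qed.

Lemma abs_arc_length_rate_le :
  Rabs (arc_length_rate x1 y1 xt1 yt1 al be) <= eps * sqrt (arc_length x1 y1 al be) / sqrt A.
Proof.
  apply (abs_RInt_le_amgm St e S); try lra; try integrable.
  - apply arc_energy_le.
  - apply arc_length_pos.
  - intros gam Hg th _. apply speed_rate_amgm_at, Hg.
Qed.

Lemma abs_proj_mul_arc_length_sub_moment_le th0 : al <= th0 <= be ->
  Rabs (f th0 * arc_length x1 y1 al be - arc_moment f x1 y1 al be) <= arc_length x1 y1 al be ^ 2.
Proof.
  intros Hth0. fold L N.
  replace (f th0 * L - N) with (RInt (fun th => (f th0 - f th) * S th) al be).
  2: { rewrite (RInt_ext _ (fun th => f th0 * S th - f th * S th)) by (intros; ring_R).
       rewrite RInt_minus_R, RInt_scal_R; [reflexivity | integrable ..]. }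
  replace (L ^ 2) with (RInt (fun th => L * S th) al be).
  2: { rewrite RInt_scal_R by integrable. unfold L, arc_length, S. ring_R. }
  apply abs_RInt_le_RInt; [lra | integrable | integrable |].
  intros x Hx. pose proof (arc_speed_pos x). rewrite Rabs_mult, (Rabs_right (S x)) by lra.
  apply Rmult_le_compat_r; [lra |]. rewrite Rabs_minus_sym.
  apply (oscillation_le_RInt f f1 S); auto.
  intros z. apply (ex_derive_continuous (K := R_AbsRing) (V := R_NormedModule)). derivable.
Qed.

Fact abs_RInt_velocity_le : Rabs (RInt (fun th => ft th * S th) al be) <= eps * sqrt L.
Proof.
  rewrite <- (Rdiv_1_r (eps * sqrt L)), <- sqrt_1.
  apply (abs_RInt_le_amgm _ e S); try lra; try integrable.
  - apply arc_energy_le.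
  - apply arc_length_pos.
  - intros gam Hg th _. rewrite Rmult_1_r. apply velocity_amgm; auto; [apply arc_speed_pos | lra].
Qed.

(* The bound |f L - N| <= L^2 absorbs the factor 1/L^2 in the derivative of the mean N/L. *)
Fact abs_RInt_deviation_rate_le :
  Rabs (RInt (fun th => f th * St th) al be * L - N * Lr) <= L ^ 2 * (eps * sqrt L / sqrt A).
Proof.
  assert (HL : 0 < L) by apply arc_length_pos.
  assert (HL2 : 0 < L ^ 2) by (apply pow_lt; lra).
  set (g := fun th => (f th * L - N) * St th / L ^ 2).
  assert (Hg : RInt g al be = (RInt (fun th => f th * St th) al be * L - N * Lr) / L ^ 2).
  { rewrite (RInt_ext _ (fun th => / L ^ 2 * (L * (f th * St th) - N * St th)))
      by (intros; unfold g; field_R; lra).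
    rewrite RInt_scal_R, RInt_minus_R, !RInt_scal_R; try integrable.
    unfold Lr, arc_length_rate, St. field_R. lra. }
  assert (Hbound : Rabs (RInt g al be) <= eps * sqrt L / sqrt A).
  { apply (abs_RInt_le_amgm g e S); try lra; try (unfold g; integrable).
    - apply arc_energy_le.
    - apply arc_length_pos.
    - intros gam Hgam th Hth. eapply Rle_trans; [| apply speed_rate_amgm_at, Hgam].
      apply Rmult_le_compat_l; [lra |]. unfold g, Rdiv. rewrite !Rabs_mult.
      rewrite (Rabs_right (/ L ^ 2)) by (left; apply Rinv_0_lt_compat; lra).
      apply Rle_trans with (L ^ 2 * Rabs (St th) * / L ^ 2); [| right; field; lra].
      apply Rmult_le_compat_r; [left; apply Rinv_0_lt_compat; lra |].
      apply Rmult_le_compat_r; [apply Rabs_pos |].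
      apply abs_proj_mul_arc_length_sub_moment_le, Hth. }
  rewrite Hg in Hbound. unfold Rdiv at 1 in Hbound.
  rewrite Rabs_mult, (Rabs_right (/ L ^ 2)) in Hbound by (left; apply Rinv_0_lt_compat; lra).
  apply Rmult_le_compat_l with (r := L ^ 2) in Hbound; [| lra].
  rewrite <- Rmult_assoc, (Rmult_comm (L ^ 2)), Rmult_assoc, Rinv_r, Rmult_1_r in Hbound by lra.
  exact Hbound.
Qed.

Lemma abs_arc_moment_rate_cross_le :
  Rabs (arc_moment_rate f ft x1 y1 xt1 yt1 al be * arc_length x1 y1 al be
        - arc_moment f x1 y1 al be * arc_length_rate x1 y1 xt1 yt1 al be)
  <= arc_length x1 y1 al be * eps * sqrt (arc_length x1 y1 al be)
     + arc_length x1 y1 al be ^ 2 * eps * sqrt (arc_length x1 y1 al be) / sqrt A.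
Proof.
  fold L N Lr. assert (HL : 0 < L) by apply arc_length_pos.
  unfold arc_moment_rate. rewrite RInt_plus_R by integrable.
  set (I1 := RInt (fun th => ft th * speed (x1 th) (y1 th)) al be).
  set (I2 := RInt (fun th => f th * speed_rate (x1 th) (y1 th) (xt1 th) (yt1 th)) al be).
  assert (H1 : Rabs I1 <= eps * sqrt L) by apply abs_RInt_velocity_le.
  assert (H2 : Rabs (I2 * L - N * Lr) <= L ^ 2 * (eps * sqrt L / sqrt A))
    by apply abs_RInt_deviation_rate_le.
  replace ((I1 + I2) * L - N * Lr) with (L * I1 + (I2 * L - N * Lr)) by ring.
  eapply Rle_trans; [apply Rabs_triang |]. rewrite Rabs_mult, (Rabs_right L) by lra.
  assert (L * Rabs I1 <= L * (eps * sqrt L)) by (apply Rmult_le_compat_l; lra).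
  unfold Rdiv in *. lra.
Qed.

End ArcEstimates.

(** * Functions of time and angle *)

Definition clamp01 (t : R) : R := Rmax 0 (Rmin 1 t).

Lemma clamp01_I01 t : I01 (clamp01 t).
Proof. unfold clamp01, I01, Rmax, Rmin; repeat destruct Rle_dec; lra. Qed.

Lemma clamp01_id t : I01 t -> clamp01 t = t.
Proof. unfold clamp01, I01, Rmax, Rmin; repeat destruct Rle_dec; lra. Qed.

Lemma Rabs_clamp01_sub_le u t : Rabs (clamp01 u - clamp01 t) <= Rabs (u - t).
Proof.
  unfold clamp01, Rmax, Rmin; repeat destruct Rle_dec;
  repeat match goal with |- context [Rabs ?x] =>
    destruct (Rcase_abs x); [rewrite (Rabs_left x) by lra | rewrite (Rabs_right x) by lra] end; lra.
Qed.

Lemma locally_of_abs_lt (x d : R) (P : R -> Prop) : 0 < d ->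
  (forall y, Rabs (y - x) < d -> P y) -> locally x P.
Proof. intros Hd H. exists (mkposreal d Hd). intros y Hy. apply H, Hy. Qed.

Definition jointly_continuous (F : R -> R -> R) : Prop := forall t th, continuity_2d_pt F t th.

Definition is_tderiv_01 (F F' : R -> R -> R) : Prop :=
  forall t th, 0 < t < 1 -> is_derive (fun u => F u th) t (F' t th).

(* Composing with [clamp01] extends a family given on [0,1] x R to R x R without changing
   it on [0,1] x R, so that integrals over θ become continuous in t on all of R. *)
Lemma cont01_clamp01 F : cont01 F -> jointly_continuous (fun t => F (clamp01 t)).
Proof.
  intros HF t th eps.
  destruct (HF (clamp01 t) th (clamp01_I01 t) eps (cond_pos eps)) as [d [Hd H]].
  exists (mkposreal d Hd). intros u v Hu Hv. simpl in *.
  apply H; [apply clamp01_I01 | | exact Hv].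
  eapply Rle_lt_trans; [apply Rabs_clamp01_sub_le | exact Hu].
Qed.

Lemma pderiv_t01_clamp01 F F' : pderiv_t01 F F' ->
  is_tderiv_01 (fun t => F (clamp01 t)) (fun t => F' (clamp01 t)).
Proof.
  intros HF t th Ht. rewrite (clamp01_id t) by (unfold I01; lra).
  apply is_derive_Reals. intros eps Heps.
  destruct (HF t th ltac:(unfold I01; lra) eps Heps) as [d [Hd H]].
  assert (Hpos : 0 < Rmin d (Rmin t (1 - t))) by (repeat apply Rmin_pos; lra).
  exists (mkposreal _ Hpos). intros h Hh Hhd. simpl in Hhd.
  pose proof (Rmin_l d (Rmin t (1 - t))). pose proof (Rmin_r d (Rmin t (1 - t))).
  pose proof (Rmin_l t (1 - t)). pose proof (Rmin_r t (1 - t)).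
  apply Rabs_def2 in Hhd.
  rewrite (clamp01_id (t + h)), (clamp01_id t) by (unfold I01; lra).
  apply H; [exact Hh | unfold I01; lra | apply Rabs_def1; lra].
Qed.

Lemma jointly_continuous_plus F G : jointly_continuous F -> jointly_continuous G ->
  jointly_continuous (fun t th => F t th + G t th).
Proof. intros HF HG t th. apply continuity_2d_pt_plus; auto. Qed.

Lemma jointly_continuous_mult F G : jointly_continuous F -> jointly_continuous G ->
  jointly_continuous (fun t th => F t th * G t th).
Proof. intros HF HG t th. apply continuity_2d_pt_mult; auto. Qed.

Lemma jointly_continuous_lincomb u1 u2 X Y : jointly_continuous X -> jointly_continuous Y ->
  jointly_continuous (fun t th => u1 * X t th + u2 * Y t th).
Proof.
  intros HX HY. apply jointly_continuous_plus; apply jointly_continuous_mult; auto;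
    intros t th; apply continuity_2d_pt_const.
Qed.

Lemma jointly_continuous_speed X Y : jointly_continuous X -> jointly_continuous Y ->
  (forall t th, 0 < X t th ^ 2 + Y t th ^ 2) -> jointly_continuous (fun t th => speed (X t th) (Y t th)).
Proof.
  intros HX HY Hp t th. unfold speed.
  apply (continuity_1d_2d_pt_comp sqrt (fun t th => X t th ^ 2 + Y t th ^ 2)).
  - apply continuity_pt_sqrt. left; apply Hp.
  - apply continuity_2d_pt_plus; simpl; apply continuity_2d_pt_mult; auto;
      apply continuity_2d_pt_mult; auto; apply continuity_2d_pt_const.
Qed.

Lemma jointly_continuous_speed_rate X Y X' Y' :
  jointly_continuous X -> jointly_continuous Y -> jointly_continuous X' -> jointly_continuous Y' ->
  (forall t th, 0 < X t th ^ 2 + Y t th ^ 2) ->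
  jointly_continuous (fun t th => speed_rate (X t th) (Y t th) (X' t th) (Y' t th)).
Proof.
  intros HX HY HX' HY' Hp t th. unfold speed_rate, Rdiv.
  apply continuity_2d_pt_mult.
  - apply jointly_continuous_plus; apply jointly_continuous_mult; auto.
  - apply continuity_2d_pt_inv; [apply jointly_continuous_speed; auto |].
    apply Rgt_not_eq, sqrt_lt_R0, Hp.
Qed.

Lemma is_tderiv_01_lincomb u1 u2 X Y X' Y' : is_tderiv_01 X X' -> is_tderiv_01 Y Y' ->
  is_tderiv_01 (fun t th => u1 * X t th + u2 * Y t th) (fun t th => u1 * X' t th + u2 * Y' t th).
Proof.
  intros HX HY t th Ht. specialize (HX t th Ht). specialize (HY t th Ht).
  apply (is_derive_plus (K := R_AbsRing) (V := R_NormedModule));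
    apply is_derive_scal; auto.
Qed.

Lemma is_tderiv_01_mult X Y X' Y' : is_tderiv_01 X X' -> is_tderiv_01 Y Y' ->
  is_tderiv_01 (fun t th => X t th * Y t th) (fun t th => X' t th * Y t th + X t th * Y' t th).
Proof.
  intros HX HY t th Ht. specialize (HX t th Ht). specialize (HY t th Ht).
  apply (is_derive_mult (K := R_AbsRing) (fun u => X u th) (fun u => Y u th)); auto.
  intros; apply Rmult_comm.
Qed.

Lemma is_tderiv_01_speed X Y X' Y' : is_tderiv_01 X X' -> is_tderiv_01 Y Y' ->
  (forall t th, 0 < X t th ^ 2 + Y t th ^ 2) ->
  is_tderiv_01 (fun t th => speed (X t th) (Y t th))
               (fun t th => speed_rate (X t th) (Y t th) (X' t th) (Y' t th)).
Proof.
  intros HX HY Hp t th Ht. specialize (HX t th Ht). specialize (HY t th Ht). specialize (Hp t th).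
  set (fx := fun u => X u th) in *. set (fy := fun u => Y u th) in *.
  change (is_derive (fun u => sqrt (fx u ^ 2 + fy u ^ 2)) t
            ((fx t * X' t th + fy t * Y' t th) / sqrt (fx t ^ 2 + fy t ^ 2))).
  auto_derive.
  - repeat split; try (eexists; eassumption). unfold fx, fy; nra.
  - change (Derive (fun x : R => fx x) t) with (Derive fx t).
    change (Derive (fun x : R => fy x) t) with (Derive fy t).
    rewrite (is_derive_unique fx t _ HX), (is_derive_unique fy t _ HY).
    replace (fx t * (fx t * 1) + fy t * (fy t * 1)) with (fx t ^ 2 + fy t ^ 2) by ring.
    field. apply Rgt_not_eq, sqrt_lt_R0. unfold fx, fy in *; nra.
Qed.

Lemma ex_RInt_jointly_continuous F a b t : jointly_continuous F -> ex_RInt (F t) a b.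
Proof.
  intros H. apply (ex_RInt_continuous (V := R_CompleteNormedModule)). intros z _.
  apply continuity_pt_filterlim, continuity_pt_locally. intros eps.
  destruct (H t z eps) as [d Hd]. apply locally_of_abs_lt with d; [apply cond_pos |].
  intros y Hy. apply Hd; [rewrite Rminus_eq_0, Rabs_R0; apply cond_pos | exact Hy].
Qed.

Lemma continuity_pt_RInt_param F a b t0 : a <= b -> jointly_continuous F ->
  continuity_pt (fun t => RInt (F t) a b) t0.
Proof.
  intros Hab H. apply continuity_pt_locally. intros eps.
  assert (He : 0 < eps / (b - a + 1)) by (apply Rdiv_lt_0_compat; [apply cond_pos | lra]).
  destruct (uniform_continuity_2d_1d' F a b t0 (fun x _ => H t0 x) (mkposreal _ He)) as [d Hd].
  apply locally_of_abs_lt with d; [apply cond_pos |]. intros u Hu.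
  rewrite <- RInt_minus_R by (apply ex_RInt_jointly_continuous; exact H).
  eapply Rle_lt_trans.
  { apply abs_RInt_le_const with (M := eps / (b - a + 1)); auto.
    - apply ex_RInt_minus_R; apply ex_RInt_jointly_continuous; exact H.
    - intros x Hx. left. pose proof (cond_pos d). apply Rabs_def2 in Hu.
      apply Hd; [lra | lra | lra | lra |]. rewrite Rminus_eq_0, Rabs_R0. apply cond_pos. }
  pose proof (cond_pos eps).
  apply Rlt_le_trans with ((b - a + 1) * (eps / (b - a + 1))); [apply Rmult_lt_compat_r; lra |].
  right. field. lra.
Qed.

Lemma is_derive_RInt_param_01 F F' a b t : jointly_continuous F -> jointly_continuous F' ->
  is_tderiv_01 F F' -> 0 < t < 1 -> is_derive (fun u => RInt (F u) a b) t (RInt (F' t) a b).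
Proof.
  intros HF HF' HD Ht.
  assert (Hd : 0 < Rmin t (1 - t)) by (apply Rmin_pos; lra).
  assert (Hloc : forall u, Rabs (u - t) < Rmin t (1 - t) -> 0 < u < 1).
  { intros u Hu. pose proof (Rmin_l t (1 - t)). pose proof (Rmin_r t (1 - t)).
    apply Rabs_def2 in Hu. lra. }
  replace (RInt (F' t) a b) with (RInt (fun th => Derive (fun u => F u th) t) a b).
  - apply (is_derive_RInt_param F a b t).
    + apply locally_of_abs_lt with (Rmin t (1 - t)); auto.
      intros y Hy th _. exists (F' y th). apply HD. auto.
    + intros th _. apply continuity_2d_pt_ext_loc with F'; [| apply HF'].
      exists (mkposreal _ Hd). intros u v Hu Hv. simpl in Hu.
      symmetry. apply is_derive_unique, HD. auto.
    + apply locally_of_abs_lt with 1; [lra |]. intros y _. apply ex_RInt_jointly_continuous, HF.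
  - apply RInt_ext. intros x _. apply is_derive_unique, HD, Ht.
Qed.

(** * The displacement estimate *)

(* k bounds the drift of the square root of the arclength over [0,1] (sqrt_drift_le). *)
Definition displacement_budget (A eps sg : R) : R :=
  let k := eps / (2 * sqrt A) in
  eps / (sg - k) + eps * (sg + k) / sqrt A + (sg + k) ^ 2 + sg ^ 2.

Lemma abs_sub_div_le_of_abs_mul_sub_le x l n : 0 < l -> Rabs (x * l - n) <= l ^ 2 ->
  Rabs (x - n / l) <= l.
Proof.
  intros Hl H. replace (x - n / l) with ((x * l - n) / l) by (field; lra).
  unfold Rdiv. rewrite Rabs_mult, Rabs_inv, (Rabs_right l) by lra.
  apply Rmult_le_reg_r with l; [lra |]. rewrite Rmult_assoc, Rinv_l by lra. nra.
Qed.

Lemma exists_unit_vector_norm dx dy :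
  exists u1 u2, u1 ^ 2 + u2 ^ 2 = 1 /\ sqrt (dx ^ 2 + dy ^ 2) = u1 * dx + u2 * dy.
Proof.
  set (D := sqrt (dx ^ 2 + dy ^ 2)).
  assert (HD2 : D * D = dx ^ 2 + dy ^ 2) by (apply sqrt_sqrt; nra).
  destruct (Req_dec D 0) as [HD0|HD0].
  - exists 1, 0. split; [ring |]. rewrite HD0 in HD2 |- *. nra.
  - exists (dx / D), (dy / D). split.
    + replace ((dx / D) ^ 2 + (dy / D) ^ 2) with ((dx ^ 2 + dy ^ 2) / (D * D)) by (field; lra).
      rewrite HD2. field. nra.
    + replace (dx / D * dx + dy / D * dy) with ((dx ^ 2 + dy ^ 2) / D) by (field; lra).
      rewrite <- HD2. field. lra.
Qed.

Lemma exists_arc_around th0 d : 0 <= th0 < 2 * PI -> 0 < d <= PI ->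
  exists al be, 0 <= al /\ al < be /\ be <= 2 * PI /\ be - al = d /\ al <= th0 <= be.
Proof.
  intros Hth0 Hd. destruct (Rle_dec th0 PI).
  - exists th0, (th0 + d). repeat split; lra.
  - exists (th0 - d), th0. repeat split; lra.
Qed.

Section PathEstimates.

Variables (A eps : R) (Dx Dy : nat -> nat -> R -> R -> R).
Hypothesis HA : 0 < A.
Hypothesis Heps : 0 < eps.
Hypothesis HDx : smooth_family Dx.
Hypothesis HDy : smooth_family Dy.
Hypothesis Himm : forall t th, I01 t -> speed (Dx 0%nat 1%nat t th) (Dy 0%nat 1%nat t th) <> 0.
Hypothesis Hhor : forall t th, I01 t ->
  Dx 1%nat 0%nat t th * Dx 0%nat 1%nat t th + Dy 1%nat 0%nat t th * Dy 0%nat 1%nat t th = 0.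
Hypothesis Henergy : forall t, I01 t ->
  RInt (fun th => energy_density A (Dx 0%nat 1%nat t th) (Dy 0%nat 1%nat t th)
                    (Dx 0%nat 2%nat t th) (Dy 0%nat 2%nat t th) (Dx 1%nat 0%nat t th) (Dy 1%nat 0%nat t th))
    0 (2 * PI) = eps ^ 2.

Section Arc.

Variables (u1 u2 al be : R).
Hypothesis Hu : u1 ^ 2 + u2 ^ 2 = 1.
Hypothesis Hal : 0 <= al.
Hypothesis Hab : al < be.
Hypothesis Hbe : be <= 2 * PI.

Let X i j t := Dx i j (clamp01 t).
Let Y i j t := Dy i j (clamp01 t).
Let P i t th := u1 * X i 0%nat t th + u2 * Y i 0%nat t th.
Let L t := arc_length (X 0%nat 1%nat t) (Y 0%nat 1%nat t) al be.
Let N t := arc_moment (P 0%nat t) (X 0%nat 1%nat t) (Y 0%nat 1%nat t) al be.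
Let Lr t := arc_length_rate (X 0%nat 1%nat t) (Y 0%nat 1%nat t) (X 1%nat 1%nat t) (Y 1%nat 1%nat t) al be.
Let Nr t := arc_moment_rate (P 0%nat t) (P 1%nat t) (X 0%nat 1%nat t) (Y 0%nat 1%nat t)
              (X 1%nat 1%nat t) (Y 1%nat 1%nat t) al be.

Fact X_continuous i j : jointly_continuous (X i j).
Proof. apply cont01_clamp01, HDx. Qed.

Fact Y_continuous i j : jointly_continuous (Y i j).
Proof. apply cont01_clamp01, HDy. Qed.

Fact X_tderiv i j : is_tderiv_01 (X i j) (X (S i) j).
Proof. apply pderiv_t01_clamp01, HDx. Qed.

Fact Y_tderiv i j : is_tderiv_01 (Y i j) (Y (S i) j).
Proof. apply pderiv_t01_clamp01, HDy. Qed.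

Fact XY_sq_speed_pos t th : 0 < X 0%nat 1%nat t th ^ 2 + Y 0%nat 1%nat t th ^ 2.
Proof. apply sum_sq_pos_of_speed_neq0, Himm, clamp01_I01. Qed.

Local Hint Resolve X_continuous Y_continuous X_tderiv Y_tderiv XY_sq_speed_pos : core.

Fact arc_length_path_continuous t : continuity_pt L t.
Proof.
  apply (continuity_pt_RInt_param (fun t th => speed (X 0%nat 1%nat t th) (Y 0%nat 1%nat t th)));
    [lra | apply jointly_continuous_speed; auto].
Qed.

Fact arc_moment_path_continuous t : continuity_pt N t.
Proof.
  apply (continuity_pt_RInt_param
           (fun t th => P 0%nat t th * speed (X 0%nat 1%nat t th) (Y 0%nat 1%nat t th))); [lra |].
  apply jointly_continuous_mult; [apply jointly_continuous_lincomb | apply jointly_continuous_speed]; auto.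
Qed.

Fact arc_length_path_derive t : 0 < t < 1 -> is_derive L t (Lr t).
Proof.
  apply (is_derive_RInt_param_01 (fun t th => speed (X 0%nat 1%nat t th) (Y 0%nat 1%nat t th))
           (fun t th => speed_rate (X 0%nat 1%nat t th) (Y 0%nat 1%nat t th)
                          (X 1%nat 1%nat t th) (Y 1%nat 1%nat t th))).
  - apply jointly_continuous_speed; auto.
  - apply jointly_continuous_speed_rate; auto.
  - apply is_tderiv_01_speed; auto.
Qed.

Fact arc_moment_path_derive t : 0 < t < 1 -> is_derive N t (Nr t).
Proof.
  apply (is_derive_RInt_param_01
           (fun t th => P 0%nat t th * speed (X 0%nat 1%nat t th) (Y 0%nat 1%nat t th))
           (fun t th => P 1%nat t th * speed (X 0%nat 1%nat t th) (Y 0%nat 1%nat t th)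
                        + P 0%nat t th * speed_rate (X 0%nat 1%nat t th) (Y 0%nat 1%nat t th)
                                           (X 1%nat 1%nat t th) (Y 1%nat 1%nat t th))).
  - apply jointly_continuous_mult; [apply jointly_continuous_lincomb | apply jointly_continuous_speed]; auto.
  - apply jointly_continuous_plus; apply jointly_continuous_mult;
      try apply jointly_continuous_lincomb; try apply jointly_continuous_speed;
      try apply jointly_continuous_speed_rate; auto.
  - apply is_tderiv_01_mult; [apply is_tderiv_01_lincomb | apply is_tderiv_01_speed]; auto.
Qed.

Fact arc_estimates_at t : 0 <= t <= 1 ->
  0 < L t /\ Rabs (Lr t) <= eps * sqrt (L t) / sqrt A /\
  Rabs (Nr t * L t - N t * Lr t) <= L t * eps * sqrt (L t) + L t ^ 2 * eps * sqrt (L t) / sqrt A /\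
  (forall th0, al <= th0 <= be -> Rabs (P 0%nat t th0 * L t - N t) <= L t ^ 2).
Proof.
  intros It. unfold L, N, Lr, Nr, P, X, Y. rewrite (clamp01_id t It).
  assert (dX : forall i j th, is_derive (Dx i j t) th (Dx i (S j) t th)) by (intros; apply HDx, It).
  assert (dY : forall i j th, is_derive (Dy i j t) th (Dy i (S j) t th)) by (intros; apply HDy, It).
  assert (eX : forall i j th, ex_derive (Dx i j t) th) by (intros; eexists; apply dX).
  assert (eY : forall i j th, ex_derive (Dy i j t) th) by (intros; eexists; apply dY).
  set (f1 := fun th => u1 * Dx 0%nat 1%nat t th + u2 * Dy 0%nat 1%nat t th).
  assert (df : forall th, is_derive (fun th => u1 * Dx 0%nat 0%nat t th + u2 * Dy 0%nat 0%nat t th) th (f1 th)).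
  { intros th. apply (is_derive_plus (K := R_AbsRing) (V := R_NormedModule));
    [apply is_derive_scal, dX | apply is_derive_scal, dY]. }
  assert (ef : forall th, ex_derive (fun th => u1 * Dx 1%nat 0%nat t th + u2 * Dy 1%nat 0%nat t th) th).
  { intros th. apply (ex_derive_plus (K := R_AbsRing) (V := R_NormedModule));
      apply ex_derive_scal; auto. }
  assert (Hf1 : forall th, Rabs (f1 th) <= speed (Dx 0%nat 1%nat t th) (Dy 0%nat 1%nat t th))
    by (intros; apply abs_unit_proj_le_speed, Hu).
  assert (Hft : forall th, (u1 * Dx 1%nat 0%nat t th + u2 * Dy 1%nat 0%nat t th) ^ 2
                            <= Dx 1%nat 0%nat t th ^ 2 + Dy 1%nat 0%nat t th ^ 2)
    by (intros; apply unit_proj_sq_le, Hu).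
  assert (Him : forall th, speed (Dx 0%nat 1%nat t th) (Dy 0%nat 1%nat t th) <> 0) by (intros; apply Himm, It).
  assert (Hho := fun th => Hhor t th It).
  repeat split.
  - eapply arc_length_pos; eauto.
  - eapply abs_arc_length_rate_le; eauto.
  - eapply abs_arc_moment_rate_cross_le with (f1 := f1); eauto.
  - intros th0 Hth0.
    eapply abs_proj_mul_arc_length_sub_moment_le
      with (f := fun th => u1 * Dx 0%nat 0%nat t th + u2 * Dy 0%nat 0%nat t th) (f1 := f1); eauto.
Qed.

Lemma projection_displacement sg th0 :
  arc_length (Dx 0%nat 1%nat 0) (Dy 0%nat 1%nat 0) al be = sg ^ 2 -> 0 < sg ->
  eps / (2 * sqrt A) < sg -> al <= th0 <= be ->
  (u1 * Dx 0%nat 0%nat 1 th0 + u2 * Dy 0%nat 0%nat 1 th0)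
  - (u1 * Dx 0%nat 0%nat 0 th0 + u2 * Dy 0%nat 0%nat 0 th0) <= displacement_budget A eps sg.
Proof.
  intros HL0 Hsg Hk Hth0.
  assert (I0 : I01 0) by (split; lra). assert (I1 : I01 1) by (split; lra).
  assert (HsL0 : sqrt (L 0) = sg).
  { unfold L, X, Y. rewrite (clamp01_id 0 I0), HL0. apply sqrt_pow2. lra. }
  assert (HsL1 : Rabs (sqrt (L 1) - sqrt (L 0)) <= eps / (2 * sqrt A)).
  { apply (sqrt_drift_le L Lr eps A); auto using arc_length_path_continuous, arc_length_path_derive;
      intros t Ht; apply (arc_estimates_at t Ht). }
  assert (Hratio := ratio_drift_le L N Lr Nr eps A HA Heps arc_length_path_continuous
                      arc_length_path_derive (fun t Ht => proj1 (arc_estimates_at t Ht))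
                      (fun t Ht => proj1 (proj2 (arc_estimates_at t Ht)))
                      arc_moment_path_continuous arc_moment_path_derive
                      (fun t Ht => proj1 (proj2 (proj2 (arc_estimates_at t Ht))))).
  rewrite HsL0 in HsL1, Hratio. specialize (Hratio Hk).
  destruct (arc_estimates_at 0 I0) as [HL0pos [_ [_ Hmean0]]]. specialize (Hmean0 th0 Hth0).
  destruct (arc_estimates_at 1 I1) as [HL1pos [_ [_ Hmean1]]]. specialize (Hmean1 th0 Hth0).
  apply abs_sub_div_le_of_abs_mul_sub_le, Rabs_le_between in Hmean0; [| exact HL0pos].
  apply abs_sub_div_le_of_abs_mul_sub_le, Rabs_le_between in Hmean1; [| exact HL1pos].
  unfold P, X, Y in Hmean0, Hmean1. rewrite (clamp01_id 0 I0) in Hmean0. rewrite (clamp01_id 1 I1) in Hmean1.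
  assert (HL0sq : L 0 = sg ^ 2) by (rewrite <- HsL0, pow2_sqrt; lra).
  assert (HL1sq : L 1 <= (sg + eps / (2 * sqrt A)) ^ 2).
  { rewrite <- (pow2_sqrt (L 1)) by lra. apply pow_incr. split; [apply sqrt_pos |].
    apply Rabs_le_between in HsL1. lra. }
  unfold displacement_budget. lra.
Qed.

End Arc.

Lemma displacement_bound v sg th0 :
  (forall th, speed (Dx 0%nat 1%nat 0 th) (Dy 0%nat 1%nat 0 th) = v) ->
  0 <= th0 < 2 * PI -> 0 < sg -> eps / (2 * sqrt A) < sg -> sg ^ 2 <= PI * v ->
  sqrt ((Dx 0%nat 0%nat 0 th0 - Dx 0%nat 0%nat 1 th0) ^ 2 + (Dy 0%nat 0%nat 0 th0 - Dy 0%nat 0%nat 1 th0) ^ 2)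
  <= displacement_budget A eps sg.
Proof.
  intros Hv Hth0 Hsg Hk Hsg2.
  assert (Hv0 : 0 < v) by (rewrite <- (Hv 0); apply speed_pos, Himm; split; lra).
  destruct (exists_arc_around th0 (sg ^ 2 / v)) as [al [be [Hal [Hab [Hbe [Hlen Hin]]]]]]; [exact Hth0 | |].
  { split; [apply Rdiv_lt_0_compat; [apply pow_lt |]; lra |].
    apply Rmult_le_reg_r with v; [lra |]. unfold Rdiv. rewrite Rmult_assoc, Rinv_l by lra. lra. }
  destruct (exists_unit_vector_norm (Dx 0%nat 0%nat 1 th0 - Dx 0%nat 0%nat 0 th0)
              (Dy 0%nat 0%nat 1 th0 - Dy 0%nat 0%nat 0 th0)) as [u1 [u2 [Hu Hnorm]]].
  replace ((Dx 0%nat 0%nat 0 th0 - Dx 0%nat 0%nat 1 th0) ^ 2 + (Dy 0%nat 0%nat 0 th0 - Dy 0%nat 0%nat 1 th0) ^ 2)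
    with ((Dx 0%nat 0%nat 1 th0 - Dx 0%nat 0%nat 0 th0) ^ 2 + (Dy 0%nat 0%nat 1 th0 - Dy 0%nat 0%nat 0 th0) ^ 2)
    by ring.
  rewrite Hnorm.
  replace (u1 * (Dx 0%nat 0%nat 1 th0 - Dx 0%nat 0%nat 0 th0) + u2 * (Dy 0%nat 0%nat 1 th0 - Dy 0%nat 0%nat 0 th0))
    with ((u1 * Dx 0%nat 0%nat 1 th0 + u2 * Dy 0%nat 0%nat 1 th0)
          - (u1 * Dx 0%nat 0%nat 0 th0 + u2 * Dy 0%nat 0%nat 0 th0)) by ring.
  apply (projection_displacement u1 u2 al be); auto.
  unfold arc_length. rewrite (RInt_ext _ (fun _ => v)) by (intros; apply Hv).
  rewrite RInt_const, Hlen. unfold scal; simpl; unfold mult; simpl. field. lra.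
Qed.

End PathEstimates.

(** * Choice of the initial arclength *)

Lemma normalized_budget_le E Y : 0 < E < 36 / 100 -> 0 < Y < 1 / 2 ->
  E ^ 2 / (E + Y / 2 - Y ^ 2 / 2) + Y ^ 2 * (E + Y / 2 + Y ^ 2 / 2)
  + (E + Y / 2 + Y ^ 2 / 2) ^ 2 + (E + Y / 2) ^ 2 <= 4 * (Y + E).
Proof.
  intros HE HY.
  assert (Hfrac : E ^ 2 / (E + Y / 2 - Y ^ 2 / 2) <= E).
  { apply Rmult_le_reg_r with (E + Y / 2 - Y ^ 2 / 2); [nra |].
    unfold Rdiv. rewrite Rmult_assoc, Rinv_l by (apply Rgt_not_eq; nra).
    assert (0 <= E * (Y * (1 - Y))) by (apply Rmult_le_pos; nra). nra. }
  assert (HM : E + Y / 2 + Y ^ 2 / 2 <= 74 / 100) by nra.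
  assert (HM2 : E + Y / 2 + Y ^ 2 / 2 <= E + Y) by nra.
  assert ((E + Y / 2 + Y ^ 2 / 2) ^ 2 <= 74 / 100 * (E + Y)) by nra.
  assert ((E + Y / 2) ^ 2 <= 74 / 100 * (E + Y)) by nra.
  assert (Y ^ 2 * (E + Y / 2 + Y ^ 2 / 2) <= Y / 2 * (74 / 100)) by nra.
  lra.
Qed.

Lemma Rpower_pow_INR x y n : 0 < x -> Rpower x y ^ n = Rpower x (y * INR n).
Proof. intros Hx. rewrite <- Rpower_pow by apply exp_pos. apply Rpower_mult. Qed.

Lemma quarter_power_facts ell A : 0 < ell -> 0 < A ->
  0 < Rpower ell (1 / 4) /\ 0 < Rpower A (- (1 / 4)) /\
  ell = Rpower ell (1 / 4) ^ 4 /\ Rpower ell (3 / 4) = Rpower ell (1 / 4) ^ 3 /\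
  Rpower ell (3 / 2) = Rpower ell (1 / 4) ^ 6 /\ sqrt A * Rpower A (- (1 / 4)) ^ 2 = 1 /\
  sqrt (A * ell) = Rpower ell (1 / 4) ^ 2 / Rpower A (- (1 / 4)) ^ 2.
Proof.
  intros Hl HA.
  split; [apply exp_pos |]. split; [apply exp_pos |].
  rewrite !Rpower_pow_INR by auto. simpl INR.
  assert (Hs : forall x, 0 < x -> sqrt x = Rpower x (1 / 4 * (1 + 1))).
  { intros x Hx. rewrite <- Rpower_sqrt by auto. f_equal. field. }
  split; [replace (1 / 4 * (1 + 1 + 1 + 1)) with 1 by field; rewrite Rpower_1; auto |].
  split; [f_equal; field |].
  split; [f_equal; field |].
  split.
  - rewrite Hs, <- Rpower_plus by auto.
    replace (1 / 4 * (1 + 1) + - (1 / 4) * (1 + 1)) with 0 by field. apply Rpower_O, HA.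
  - rewrite sqrt_mult, !Hs by lra.
    replace (- (1 / 4) * (1 + 1)) with (- (1 / 4 * (1 + 1))) by ring. rewrite Rpower_Ropp.
    unfold Rdiv. rewrite Rinv_inv. ring.
Qed.

(* σ = p^2 (E + Y / 2) makes the budget p^4 times the normalized one. *)
Lemma exists_budget_le_scaled A p E Y : 0 < p -> 0 < E < 36 / 100 -> 0 < Y < 1 / 2 ->
  sqrt A = (p ^ 2 * E / Y) ^ 2 ->
  exists sg, 0 < sg /\ (p ^ 3 * E) ^ 2 / (2 * sqrt A) < sg /\ sg ^ 2 <= p ^ 4 / 2 /\
    displacement_budget A ((p ^ 3 * E) ^ 2) sg <= 4 * p ^ 4 * (Y + E).
Proof.
  intros Hp HE HY HsA. unfold displacement_budget; cbv zeta. rewrite HsA.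
  assert (Hp2 : 0 < p ^ 2) by (apply pow_lt; lra).
  assert (Hk : (p ^ 3 * E) ^ 2 / (2 * (p ^ 2 * E / Y) ^ 2) = p ^ 2 * (Y ^ 2 / 2)) by (field; lra).
  exists (p ^ 2 * (E + Y / 2)). rewrite Hk. repeat split.
  - apply Rmult_lt_0_compat; lra.
  - apply Rmult_lt_compat_l; nra.
  - replace ((p ^ 2 * (E + Y / 2)) ^ 2) with (p ^ 4 * (E + Y / 2) ^ 2) by ring.
    assert ((E + Y / 2) ^ 2 <= 1 / 2) by nra. assert (0 < p ^ 4) by (apply pow_lt; lra). nra.
  - apply Rle_trans with (p ^ 4 * (E ^ 2 / (E + Y / 2 - Y ^ 2 / 2) + Y ^ 2 * (E + Y / 2 + Y ^ 2 / 2)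
                                   + (E + Y / 2 + Y ^ 2 / 2) ^ 2 + (E + Y / 2) ^ 2)).
    + right. field. repeat split; apply Rgt_not_eq; try nra.
      replace (p ^ 2 * (E * 2 + Y) - (p * Y) ^ 2) with (p ^ 2 * (E * 2 + Y - Y ^ 2)) by ring.
      apply Rmult_lt_0_compat; nra.
    + replace (4 * p ^ 4 * (Y + E)) with (p ^ 4 * (4 * (Y + E))) by ring.
      apply Rmult_le_compat_l; [apply pow_le; lra | apply normalized_budget_le; auto].
Qed.

(* In terms of p = ℓ^(1/4), a = A^(-1/4) and e = √ε, take E = e / p^3 and Y = a e / p;
   then η = 4 p^4 (Y + E) and the smallness assumption on ε bounds E and Y. *)
Lemma exists_budget_le_eta ell A eps : 0 < ell -> 0 < A -> 0 < eps ->
  eps < Rmin (2 * sqrt (A * ell)) (Rpower ell (3 / 2)) / 8 ->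
  exists sg, 0 < sg /\ eps / (2 * sqrt A) < sg /\ sg ^ 2 <= ell / 2 /\
    displacement_budget A eps sg
    <= 4 * (Rpower ell (3 / 4) * Rpower A (- (1 / 4)) + Rpower ell (1 / 4)) * sqrt eps.
Proof.
  intros Hell HA Heps Hsmall.
  destruct (quarter_power_facts ell A Hell HA) as [Hp [Ha [Hl4 [Hl34 [Hl32 [HsAa HsAl]]]]]].
  rewrite Hl34. replace (ell / 2) with (Rpower ell (1 / 4) ^ 4 / 2) by (rewrite <- Hl4; reflexivity).
  rewrite Hl32, HsAl in Hsmall.
  set (p := Rpower ell (1 / 4)) in *. set (a := Rpower A (- (1 / 4))) in *.
  set (e := sqrt eps).
  assert (He : 0 < e) by (apply sqrt_lt_R0; lra).
  assert (He2 : eps = e ^ 2) by (unfold e; rewrite pow2_sqrt; lra).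
  rewrite He2 in Hsmall |- *.
  assert (Hc1 : e ^ 2 * a ^ 2 / p ^ 2 < 1 / 4).
  { pose proof (Rmin_l (2 * (p ^ 2 / a ^ 2)) (p ^ 6)).
    assert (0 < a ^ 2) by (apply pow_lt; lra). assert (0 < p ^ 2) by (apply pow_lt; lra).
    apply Rmult_lt_reg_r with (p ^ 2 / a ^ 2); [apply Rdiv_lt_0_compat; lra |].
    replace (e ^ 2 * a ^ 2 / p ^ 2 * (p ^ 2 / a ^ 2)) with (e ^ 2) by (field; lra). lra. }
  assert (Hc2 : e ^ 2 / p ^ 6 < 1 / 8).
  { pose proof (Rmin_r (2 * (p ^ 2 / a ^ 2)) (p ^ 6)). assert (0 < p ^ 6) by (apply pow_lt; lra).
    apply Rmult_lt_reg_r with (p ^ 6); [lra |]. unfold Rdiv. rewrite Rmult_assoc, Rinv_l; lra. }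
  destruct (exists_budget_le_scaled A p (e / p ^ 3) (a * e / p)) as [sg Hsg]; auto.
  - split; [apply Rdiv_lt_0_compat; [| apply pow_lt]; lra |].
    replace (e ^ 2 / p ^ 6) with ((e / p ^ 3) ^ 2) in Hc2 by (field; lra). nra.
  - split; [apply Rdiv_lt_0_compat; nra |].
    replace (e ^ 2 * a ^ 2 / p ^ 2) with ((a * e / p) ^ 2) in Hc1 by (field; lra). nra.
  - apply (Rmult_eq_reg_r (a ^ 2)); [rewrite HsAa; field; lra | apply pow_nonzero; lra].
  - exists sg. replace (p ^ 3 * (e / p ^ 3)) with e in Hsg by (field; lra).
    replace (4 * (p ^ 3 * a + p) * e) with (4 * p ^ 4 * (a * e / p + e / p ^ 3)) by (field; lra).
    exact Hsg.
Qed.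

Lemma periodic_nat_shift (f : R -> R) T : (forall x, f (x + T) = f x) ->
  forall n x, f (x + T * INR n) = f x.
Proof.
  intros H n. induction n as [|n IH]; intros x.
  - simpl. rewrite Rmult_0_r, Rplus_0_r. reflexivity.
  - rewrite S_INR. replace (x + T * (INR n + 1)) with ((x + T * INR n) + T) by ring.
    rewrite H. apply IH.
Qed.

Lemma periodic_Z_shift (f : R -> R) T : (forall x, f (x + T) = f x) ->
  forall z x, f (x + T * IZR z) = f x.
Proof.
  intros H z x. destruct (Z_le_gt_dec 0 z) as [Hz|Hz].
  - replace (IZR z) with (INR (Z.to_nat z)) by (rewrite INR_IZR_INZ, Z2Nat.id; auto).
    apply periodic_nat_shift, H.
  - replace (IZR z) with (- INR (Z.to_nat (- z)))
      by (rewrite INR_IZR_INZ, Z2Nat.id by lia; rewrite opp_IZR; ring).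
    rewrite <- (periodic_nat_shift f T H (Z.to_nat (- z)) (x + T * - INR (Z.to_nat (- z)))).
    f_equal. ring.
Qed.

Lemma exists_periodic_representative T x : 0 < T ->
  exists x0 z, 0 <= x0 < T /\ x = x0 + T * IZR z.
Proof.
  intros HT. destruct (archimed (x / T)) as [H1 H2].
  exists (x - T * (IZR (up (x / T)) - 1)), (up (x / T) - 1)%Z.
  rewrite minus_IZR. simpl IZR. split; [| ring].
  set (z := IZR (up (x / T))) in *.
  assert (x = T * (x / T)) by (field; lra).
  split; nra.
Qed.

Theorem proposition3p5 (A eps : R) (Dx Dy : nat -> nat -> R -> R -> R) :
  0 < A ->
  smooth_family Dx -> smooth_family Dy ->
  (forall t th, I01 t ->
     Dx 0%nat 0%nat t (th + 2 * PI) = Dx 0%nat 0%nat t th /\ Dy 0%nat 0%nat t (th + 2 * PI) = Dy 0%nat 0%nat t th) ->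
  (forall t th, I01 t -> speed (Dx 0%nat 1%nat t th) (Dy 0%nat 1%nat t th) <> 0) ->
  let ell := RInt (fun th => speed (Dx 0%nat 1%nat 0 th) (Dy 0%nat 1%nat 0 th)) 0 (2 * PI) in
  (forall th, speed (Dx 0%nat 1%nat 0 th) (Dy 0%nat 1%nat 0 th) = ell / (2 * PI)) ->
  0 < eps ->
  eps < Rmin (2 * sqrt (A * ell)) (Rpower ell (3 / 2)) / 8 ->
  (forall t th, I01 t ->
     Dx 1%nat 0%nat t th * Dx 0%nat 1%nat t th + Dy 1%nat 0%nat t th * Dy 0%nat 1%nat t th = 0) ->
  (forall t, I01 t ->
     RInt (fun th =>
       (1 + A * (curvature (Dx 0%nat 1%nat t th) (Dy 0%nat 1%nat t th) (Dx 0%nat 2%nat t th) (Dy 0%nat 2%nat t th)) ^ 2)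
       * (Dx 1%nat 0%nat t th ^ 2 + Dy 1%nat 0%nat t th ^ 2)
       * speed (Dx 0%nat 1%nat t th) (Dy 0%nat 1%nat t th)) 0 (2 * PI) = eps ^ 2) ->
  let eta := 4 * (Rpower ell (3 / 4) * Rpower A (- (1 / 4)) + Rpower ell (1 / 4)) * sqrt eps in
  forall th,
    sqrt ((Dx 0%nat 0%nat 0 th - Dx 0%nat 0%nat 1 th) ^ 2 + (Dy 0%nat 0%nat 0 th - Dy 0%nat 0%nat 1 th) ^ 2) <= eta.
Proof.
  intros HA HDx HDy Hper Himm ell Hcs Heps Hsmall Hhor Henergy eta th.
  pose proof PI_RGT_0 as Hpi.
  assert (I0 : I01 0) by (split; lra). assert (I1 : I01 1) by (split; lra).
  assert (Hv : 0 < ell / (2 * PI)) by (rewrite <- (Hcs 0); apply speed_pos, Himm, I0).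
  assert (Hell : 0 < ell) by (replace ell with (ell / (2 * PI) * (2 * PI)) by (field; lra); nra).
  destruct (exists_budget_le_eta ell A eps Hell HA Heps Hsmall) as [sg [Hsg [Hk [Hsg2 Hbudget]]]].
  destruct (exists_periodic_representative (2 * PI) th) as [th0 [z [Hth0 ->]]]; [lra |].
  rewrite (periodic_Z_shift _ _ (fun x => proj1 (Hper 0 x I0))),
    (periodic_Z_shift _ _ (fun x => proj1 (Hper 1 x I1))),
    (periodic_Z_shift _ _ (fun x => proj2 (Hper 0 x I0))),
    (periodic_Z_shift _ _ (fun x => proj2 (Hper 1 x I1))).
  eapply Rle_trans; [| exact Hbudget].
  apply (displacement_bound A eps Dx Dy) with (v := ell / (2 * PI)); auto.
  replace (PI * (ell / (2 * PI))) with (ell / 2) by (field; lra). exact Hsg2.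
Qed.
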